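(* Every graph $G$ (with at least one vertex) of sd-degeneracy at most $d$ admits a clean signed tree model of width at most $d+1$.
   Context: sd-degeneracy: for distinct vertices $u,v$ let $\mathrm{sd}_G(u,v) := |(N_G(u)\setminus\{v\}) \triangle (N_G(v)\setminus\{u\})|$; $\mathrm{sdd}(G)$ is the smallest $d\ge 0$ such that $|V(G)|=1$ or there are distinct $u,v$ with $\mathrm{sd}_G(u,v)\le d$ and $\mathrm{sdd}(G-v)\le d$. Tree notation: for a rooted tree $T$, $u\prec_T u'$ means $u$ is a strict ancestor of $u'$, and $u\preceq_T u'$ means $u=u'$ or $u\prec_T u'$. For unordered pairs, $uv\preceq_T u'v'$ means ($u\preceq_T u'$ and $v\preceq_T v'$) or ($v\preceq_T u'$ and $u\preceq_T v'$); $uv\prec_T u'v'$ means $uv\preceq_T u'v'$ and $\{u,v\}\neq\{u',v'\}$. A rooted binary tree is full if every non-leaf node has exactly two children. A transversal pair of $T$ is an unordered pair of distinct nodes neither of which is an ancestor of the other. Two transversal pairs $\{u,v\},\{u',v'\}$ cross if their endpoints can be named $\{a,b\}=\{u,v\}$, $\{a',b'\}=\{u',v'\}$ so that $a\prec_T a'$ and $b'\prec_T b$. A signed tree model is a triple $(T,A(T),B(T))$ where $T$ is a full rooted binary tree, and $A(T)$ (green edges / transversal anti-edges) and $B(T)$ (blue edges / transversal edges) are disjoint sets of transversal pairs of $T$ such that no two pairs in $A(T)\cup B(T)$ cross. It defines the graph $G_{\mathcal T}$ with vertex set the set $L(T)$ of leaves of $T$, where distinct leaves $u,v$ are adjacent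 iff there is $u'v'\in B(T)$ with $u'v'\preceq_T uv$ and there is no $u''v''\in A(T)$ with $u'v'\prec_T u''v''\preceq_T uv$. A graph $G$ admits the model if $G$ is (isomorphic to) $G_{\mathcal T}$ via a bijection between $V(G)$ and $L(T)$. The width of the model is the degeneracy of the graph $(V(T),A(T)\cup B(T))$. The model is clean if every pair of sibling nodes of $T$ belongs to $A(T)\cup B(T)$. *)

From mathcomp Require Import all_boot.
Set Implicit Arguments. Unset Strict Implicit. Unset Printing Implicit Defensive.

(* Induced subgraphs of a simple graph (V, E) are represented by vertex sets S. *)
Definition nbhd (V : finType) (E : rel V) (S : {set V}) (x : V) : {set V} :=
  [set w in S | E x w].

Definition sd (V : finType) (E : rel V) (S : {set V}) (u v : V) : nat :=
  let Nu := nbhd E S u :\ v in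
  let Nv := nbhd E S v :\ u in
  #|(Nu :\: Nv) :|: (Nv :\: Nu)|.

(* sdd_le E d S  <->  sdd(G[S]) <= d *)
Inductive sdd_le (V : finType) (E : rel V) (d : nat) : {set V} -> Prop :=
| sdd_single (S : {set V}) : #|S| = 1 -> sdd_le E d S
| sdd_step (S : {set V}) (u v : V) : u \in S -> v \in S -> u != v -> sd E S u v <= d ->
    sdd_le E d (S :\ v) -> sdd_le E d S.

Inductive btree : Type := BLeaf | BNode of btree & btree.

(* nodes are addressed by their path from the root (false = left, true = right) *)
Fixpoint is_node (t : btree) (p : seq bool) : bool :=
  match p, t with
  | [::], _ => true
  | b :: p', BNode l r => is_node (if b then r else l) p'
  | _ :: _, BLeaf => false
  end.

Fixpoint is_leaf (t : btree) (p : seq bool) : bool :=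
  match p, t with
  | [::], BLeaf => true
  | [::], BNode _ _ => false
  | b :: p', BNode l r => is_leaf (if b then r else l) p'
  | _ :: _, BLeaf => false
  end.

Definition anc (u u' : seq bool) : bool := prefix u u'.
Definition sanc (u u' : seq bool) : bool := prefix u u' && (u != u').

Definition pair_le (u v u' v' : seq bool) : bool :=
  (anc u u' && anc v v') || (anc v u' && anc u v').
Definition same_pair (u v u' v' : seq bool) : bool :=
  ((u == u') && (v == v')) || ((u == v') && (v == u')).
Definition pair_lt (u v u' v' : seq bool) : bool :=
  pair_le u v u' v' && ~~ same_pair u v u' v'.

Definition transversal (t : btree) (u v : seq bool) : bool :=
  [&& is_node t u, is_node t v, u != v, ~~ anc u v & ~~ anc v u].

Definition cross (u v u' v' : seq bool) : Prop :=
  exists a b a' b',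
    same_pair a b u v /\ same_pair a' b' u' v' /\ sanc a a' /\ sanc b' b.

(* A set of unordered pairs of nodes is represented by a symmetric relation. *)
Definition pair_set (t : btree) (R : rel (seq bool)) : Prop :=
  (forall u v, R u v = R v u) /\ (forall u v, R u v -> transversal t u v).

Definition signed_tree_model (t : btree) (A B : rel (seq bool)) : Prop :=
  [/\ pair_set t A, pair_set t B,
      (forall u v, ~~ (A u v && B u v)) &
      (forall u v u' v', (A u v || B u v) -> (A u' v' || B u' v') ->
                         ~ cross u v u' v')].

Definition model_adj (A B : rel (seq bool)) (u v : seq bool) : Prop :=
  exists u' v', B u' v' /\ pair_le u' v' u v /\
    ~ (exists u'' v'', A u'' v'' /\ pair_lt u' v' u'' v'' /\ pair_le u'' v'' u v).

Definition degeneracy_le (t : btree) (AB : rel (seq bool)) (k : nat) : Prop :=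
  forall S : seq (seq bool), uniq S -> all (is_node t) S -> S != [::] ->
    exists2 x, x \in S & count (AB x) S <= k.

Definition clean (t : btree) (A B : rel (seq bool)) : Prop :=
  forall p, is_node t (rcons p false) ->
    A (rcons p false) (rcons p true) || B (rcons p false) (rcons p true).

Definition admits (V : finType) (E : rel V) (t : btree) (A B : rel (seq bool)) : Prop :=
  exists f : V -> seq bool,
    [/\ injective f, (forall x, is_leaf t (f x)),
        (forall p, is_leaf t p -> exists x, f x = p) &
        (forall x y, x != y -> (E x y <-> model_adj A B (f x) (f y)))].

From Pilot Require Import Defs.
From mathcomp Require Import all_boot.
Set Implicit Arguments. Unset Strict Implicit. Unset Printing Implicit Defensive.

(* Induct along the elimination order witnessing sdd(G) <= d.  When v is
   deleted next to u with sd(u,v) <= d, take a clean model of G - v in which u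
   sits at the leaf p, and make p an inner node with leaf children p0 for u and
   p1 for v.  The old pairs are kept: an old pair lies below (p_b, q) iff it lies
   below (p, q), so both children inherit the adjacencies of u.  This is correct
   for v except at the at most d vertices w on which u and v disagree, so we add
   the pairs {p1, w}, blue iff vw is an edge, and the sibling pair {p0, p1}, blue
   iff uv is an edge.  The new pairs join leaves, hence cross nothing, and only
   p1 gains neighbours, at most d + 1 of them, so the width stays at most d + 1. *)

Lemma prefix_anti (T : eqType) (s t : seq T) : prefix s t -> prefix t s -> s = t.
Proof.
move=> st ts; have /anti_leq sz : size s <= size t <= size s by rewrite !size_prefix.
by move: st; rewrite prefixE sz take_size => /eqP.
Qed.

Lemma prefix_rconsR (T : eqType) (s t : seq T) x :
  prefix s (rcons t x) = (s == rcons t x) || prefix s t.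
Proof.
elim: t s => [|y t IH] [|z s] //=.
- by rewrite orbF eqseq_cons; case: s.
- by rewrite IH eqseq_cons; case: (z == y).
Qed.

Lemma prefix_rcons_self (T : eqType) (s : seq T) x : prefix (rcons s x) s = false.
Proof. by apply/negP => /size_prefix; rewrite size_rcons ltnn. Qed.

Lemma is_leaf_node t p : is_leaf t p -> is_node t p.
Proof. by elim: p t => [|b p IH] [|l r] //= /IH. Qed.

Lemma is_node_prefix t q p : prefix q p -> is_node t p -> is_node t q.
Proof.
elim: q p t => [|b q IH] [|c p] [|l r] //=.
by move=> /andP[/eqP -> Hp] /(IH _ _ Hp).
Qed.

Lemma is_leaf_prefix t p q : is_leaf t p -> is_node t q -> prefix p q -> p = q.
Proof.
elim: p q t => [|b p IH] [|c q] [|l r] //=.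
by move=> Hl Hn /andP[/eqP eb Hp]; subst c; rewrite (IH _ _ Hl Hn Hp).
Qed.

Lemma is_leaf_sanc t p q : is_leaf t p -> is_node t q -> sanc p q = false.
Proof. by move=> lp nq; apply/negP => /andP[/(is_leaf_prefix lp nq) ->]; rewrite eqxx. Qed.

Lemma is_node_rcons_leaf t p b : is_leaf t p -> is_node t (rcons p b) = false.
Proof.
move=> lp; apply/negP => n; have := is_leaf_prefix lp n (prefix_rcons p b).
by move/(f_equal size)/eqP; rewrite size_rcons eqn_leq ltnn andbF.
Qed.

Fixpoint graft (t : btree) (p : seq bool) : btree :=
  match p, t with
  | [::], _ => BNode BLeaf BLeaf
  | b :: p', BNode l r => if b then BNode l (graft r p') else BNode (graft l p') r
  | _ :: _, BLeaf => BLeaf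
  end.

Lemma is_node_graft t p q : is_leaf t p ->
  is_node (graft t p) q = [|| is_node t q, q == rcons p false | q == rcons p true].
Proof.
elim: p t q => [|b p IH] [|l r] //= q.
- by move=> _; case: q => [|[] [|c q]].
- by case: b => lp; case: q => [|[] q] //=; rewrite ?eqseq_cons /= ?IH ?orbF ?andbF.
Qed.

Lemma is_leaf_graft t p q : is_leaf t p ->
  is_leaf (graft t p) q =
    [|| is_leaf t q && (q != p), q == rcons p false | q == rcons p true].
Proof.
elim: p t q => [|b p IH] [|l r] //= q.
- by move=> _; case: q => [|[] [|c q]].
- by case: b => lp; case: q => [|[] q] //=; rewrite ?eqseq_cons /= ?IH ?orbF ?andbF ?andbT.
Qed.

Lemma pair_le_refl a b : pair_le a b a b.
Proof. by rewrite /pair_le /anc !prefix_refl. Qed.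

Lemma pair_le_syml x y a b : pair_le x y a b = pair_le y x a b.
Proof. by rewrite /pair_le orbC. Qed.

Lemma pair_le_symr x y a b : pair_le x y a b = pair_le x y b a.
Proof. by rewrite /pair_le orbC andbC [anc y b && _]andbC. Qed.

Lemma pair_le_anti x y a b : pair_le x y a b -> pair_le a b x y -> same_pair x y a b.
Proof.
rewrite /pair_le /same_pair /anc.
case/orP=> /andP[h1 h2] /orP[] /andP[h3 h4].
- by rewrite (prefix_anti h1 h3) (prefix_anti h2 h4) !eqxx.
- rewrite (prefix_anti h1 (prefix_trans h4 (prefix_trans h2 h3))).
  by rewrite (prefix_anti h2 (prefix_trans h3 (prefix_trans h1 h4))) !eqxx.
- rewrite (prefix_anti (prefix_trans h4 (prefix_trans h1 h3)) h2).
  by rewrite (prefix_anti h1 (prefix_trans h3 (prefix_trans h2 h4))) !eqxx orbT.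
- by rewrite (prefix_anti h1 h4) (prefix_anti h2 h3) !eqxx orbT.
Qed.

Lemma pair_le_nodes t x y a b : pair_le x y a b -> is_node t a -> is_node t b ->
  is_node t x && is_node t y.
Proof. by case/orP=> /andP[xa yb] na nb; rewrite (is_node_prefix xa) ?(is_node_prefix yb). Qed.

Lemma transversal_sym t x y : Defs.transversal t x y = Defs.transversal t y x.
Proof. by rewrite /Defs.transversal eq_sym andbCA; congr [&& _, _, _ & _]; rewrite andbC. Qed.

Lemma leaf_transversal t a b : is_leaf t a -> is_leaf t b -> a != b -> Defs.transversal t a b.
Proof.
move=> la lb ab; rewrite /Defs.transversal (is_leaf_node la) (is_leaf_node lb) ab /anc /=.
apply/andP; split; apply: contra ab => pr.
- by rewrite (is_leaf_prefix la (is_leaf_node lb) pr).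
- by rewrite (is_leaf_prefix lb (is_leaf_node la) pr).
Qed.

Lemma cross_leaf_pair t u v u' v' : cross u v u' v' ->
  is_node t u -> is_node t v -> is_node t u' -> is_node t v' ->
  ~~ ((is_leaf t u && is_leaf t v) || (is_leaf t u' && is_leaf t v')).
Proof.
move=> [a [b [a' [b' [s [s' [aa' b'b]]]]]]] nu nv nu' nv'.
have pick (P : pred (seq bool)) x y z : (x = y \/ x = z) -> P y -> P z -> P x.
  by move=> [->|->].
have ea : (a = u \/ a = v) /\ (b = u \/ b = v) by case/orP: s => /andP[/eqP -> /eqP ->]; auto.
have ea' : (a' = u' \/ a' = v') /\ (b' = u' \/ b' = v') by case/orP: s' => /andP[/eqP -> /eqP ->]; auto.
case: ea ea' => [ha hb] [ha' hb']; apply/negP => /orP[] /andP[l l'].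
- by rewrite (is_leaf_sanc (pick _ _ _ _ ha l l') (pick _ _ _ _ ha' nu' nv')) in aa'.
- by rewrite (is_leaf_sanc (pick _ _ _ _ hb' l l') (pick _ _ _ _ hb nu nv)) in b'b.
Qed.

Lemma model_pair_nodes t A B x y : signed_tree_model t A B ->
  A x y || B x y -> is_node t x && is_node t y.
Proof. by case=> [[_ trA] [_ trB] _ _] /orP[/trA|/trB] /and5P[-> ->]. Qed.

Lemma model_adj_sym A B a b : model_adj A B a b -> model_adj A B b a.
Proof.
move=> [x [y [Bxy [le N]]]]; exists x, y; split => //; split; first by rewrite pair_le_symr.
by move=> [x' [y' [Ax [lt le']]]]; apply: N; exists x', y'; rewrite pair_le_symr.
Qed.

Lemma model_adj_iff_sym (V : Type) (E : rel V) A B x y a b : symmetric E ->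
  (E x y <-> model_adj A B a b) -> (E y x <-> model_adj A B b a).
Proof.
move=> symE [h1 h2]; rewrite symE.
by split=> [/h1 /model_adj_sym|/model_adj_sym /h2].
Qed.

Lemma model_adj_pair (A B : rel (seq bool)) a b :
  (forall u v, B u v = B v u) -> A a b || B a b -> model_adj A B a b <-> B a b.
Proof.
move=> symB Aab; split.
- move=> [x [y [Bxy [le N]]]]; case sxy: (same_pair x y a b).
  + by case/orP: sxy Bxy => /andP[/eqP <- /eqP <-] //; rewrite symB.
  + case/orP: Aab => // Aab; exfalso; apply: N; exists a, b.
    by rewrite /pair_lt le sxy pair_le_refl.
- move=> Bab; exists a, b; split => //; split; first exact: pair_le_refl.
  by move=> [x [y [_ [/andP[le /negP ns] le']]]]; apply/ns/pair_le_anti.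
Qed.

Lemma model_adj_transfer (A B A' B' : rel (seq bool)) a b a' b' :
  (forall x y, pair_le x y a b -> A x y || B x y ->
     [/\ pair_le x y a' b', A' x y = A x y & B' x y = B x y]) ->
  (forall x y, pair_le x y a' b' -> A' x y || B' x y ->
     [/\ pair_le x y a b, A x y = A' x y & B x y = B' x y]) ->
  model_adj A B a b -> model_adj A' B' a' b'.
Proof.
move=> H1 H2 [x [y [Bxy [le N]]]].
have /(H1 x y le)[le' _ eB] : A x y || B x y by rewrite Bxy orbT.
exists x, y; rewrite eB; split => //; split => // [[x' [y' [Ax [lt le'']]]]]; apply: N.
have /(H2 x' y' le'')[le3 eA _] : A' x' y' || B' x' y' by rewrite Ax.
by exists x', y'; rewrite eA.
Qed.

Section Extension.

Variables (t : btree) (A B : rel (seq bool)) (p : seq bool).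
Variables (W : seq (seq bool)) (s0 : bool) (s : seq bool -> bool).
Hypothesis model : signed_tree_model t A B.
Hypothesis leaf_p : is_leaf t p.
Hypothesis leaf_W : all (is_leaf t) W.
Hypothesis p_notin_W : p \notin W.

Local Notation p0 := (rcons p false).
Local Notation p1 := (rcons p true).
Local Notation t' := (graft t p).

Definition ext_new x y := (x == p1) && ((y == p0) || (y \in W)).
Definition ext_sign y := if y == p0 then s0 else s y.
Definition ext_A x y :=
  [|| A x y, ext_new x y && ~~ ext_sign y | ext_new y x && ~~ ext_sign x].
Definition ext_B x y :=
  [|| B x y, ext_new x y && ext_sign y | ext_new y x && ext_sign x].

Let node_p0 : is_node t p0 = false := is_node_rcons_leaf false leaf_p.
Let node_p1 : is_node t p1 = false := is_node_rcons_leaf true leaf_p.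

Lemma ext_newP x y : ext_new x y -> x = p1 /\ (y = p0 \/ y \in W).
Proof. by case/andP=> /eqP -> /orP[/eqP ->|]; auto. Qed.

Lemma ext_new_node x y : is_node t x -> ext_new x y = false.
Proof. by apply: contraTF => /ext_newP[->]; rewrite node_p1. Qed.

Lemma ext_new_leaves x y : ext_new x y -> [/\ is_leaf t' x, is_leaf t' y & x != y].
Proof.
move=> /ext_newP[-> [->|yW]]; rewrite !is_leaf_graft // !eqxx !orbT.
  by rewrite eqseq_rcons eqxx.
have ly : is_leaf t y := allP leaf_W y yW.
rewrite ly /=; split=> //.
- by apply/orP; left; apply: contraNneq p_notin_W => <-.
- by apply: contraFneq node_p1 => ->; apply: is_leaf_node.
Qed.

Lemma ext_new_asym x y : ext_new x y -> ext_new y x = false.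
Proof.
move=> nxy; apply/negP => /ext_newP[ey _]; have [_ _] := ext_new_leaves nxy.
by case/ext_newP: nxy => -> _; rewrite ey eqxx.
Qed.

Lemma ext_AB_old x y : is_node t x -> is_node t y -> ext_A x y = A x y /\ ext_B x y = B x y.
Proof. by move=> nx ny; rewrite /ext_A /ext_B !ext_new_node ?orbF. Qed.

Lemma ext_pairs x y : ext_A x y || ext_B x y ->
  A x y || B x y \/ ext_new x y \/ ext_new y x.
Proof.
rewrite /ext_A /ext_B; case: (A x y); first by left.
case: (B x y); first by left.
by case: (ext_new x y); [right; left | case: (ext_new y x); [right; right|]].
Qed.

Lemma ext_AB_new x y : ext_new x y -> ext_A x y = ~~ ext_sign y /\ ext_B x y = ext_sign y.
Proof.
move=> nxy; have old : A x y || B x y = false.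
  by apply: contraTF nxy => /(model_pair_nodes model)/andP[/ext_new_node ->].
by move: old; rewrite /ext_A /ext_B nxy ext_new_asym // !orbF => /norP[/negbTE -> /negbTE ->].
Qed.

Lemma ext_A_sym x y : ext_A x y = ext_A y x.
Proof. by case: model => [[symA _] _ _ _]; rewrite /ext_A symA; congr (_ || _); rewrite orbC. Qed.

Lemma ext_B_sym x y : ext_B x y = ext_B y x.
Proof. by case: model => [_ [symB _] _ _]; rewrite /ext_B symB; congr (_ || _); rewrite orbC. Qed.

Lemma ext_transversal x y : ext_A x y || ext_B x y -> Defs.transversal t' x y.
Proof.
have graft_tr a b : Defs.transversal t a b -> Defs.transversal t' a b.
  by case/and5P=> na nb ab a_b b_a; rewrite /Defs.transversal !is_node_graft // na nb ab a_b b_a.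
case/ext_pairs=> [|[]].
- by case: model => [[_ trA] [_ trB] _ _] /orP[/trA|/trB]; apply: graft_tr.
- by case/ext_new_leaves=> lx ly xy; apply: leaf_transversal.
- by case/ext_new_leaves=> ly lx yx; rewrite transversal_sym; apply: leaf_transversal.
Qed.

Lemma ext_signed_tree_model : signed_tree_model t' ext_A ext_B.
Proof.
case: model => _ _ disjAB ncrAB.
split; [split=> [|x y Axy]; [exact: ext_A_sym | by apply: ext_transversal; rewrite Axy]
      | split=> [|x y Bxy]; [exact: ext_B_sym | by apply: ext_transversal; rewrite Bxy orbT]
      | move=> x y | move=> x y x' y' xy x'y' cr].
- case: (boolP (ext_new x y)) => [/ext_AB_new[-> ->]|nxy]; first by case: ext_sign.
  rewrite ext_A_sym ext_B_sym.
  case: (boolP (ext_new y x)) => [/ext_AB_new[-> ->]|nyx]; first by case: ext_sign.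
  by rewrite /ext_A /ext_B (negbTE nxy) (negbTE nyx) /= !orbF.
- have /and5P[nx ny _ _ _] := ext_transversal xy.
  have /and5P[nx' ny' _ _ _] := ext_transversal x'y'.
  have new_leaves a b : ext_new a b \/ ext_new b a -> is_leaf t' a && is_leaf t' b.
    by case=> /ext_new_leaves[-> -> _].
  apply: (negP (cross_leaf_pair cr nx ny nx' ny')); apply/orP.
  case: (ext_pairs xy) => [o|/new_leaves]; last by left.
  case: (ext_pairs x'y') => [o'|/new_leaves]; last by right.
  by case: (ncrAB _ _ _ _ o o' cr).
Qed.

Lemma ext_clean : clean t A B -> clean t' ext_A ext_B.
Proof.
move=> cl q; rewrite is_node_graft // => /or3P[/cl| |].
- by case/orP=> h; rewrite /ext_A /ext_B h ?orbT.
- rewrite eqseq_rcons andbT => /eqP ->; rewrite ext_A_sym ext_B_sym.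
  have new10 : ext_new p1 p0 by rewrite /ext_new !eqxx.
  have [-> ->] := ext_AB_new new10.
  exact: orNb.
- by rewrite eqseq_rcons andbF.
Qed.

Lemma ext_new_p1 y : ext_new y p1 = false.
Proof.
apply/negP => n; have [ey _] := ext_newP n; move: n; rewrite ey => n.
by have := ext_new_asym n; rewrite n.
Qed.

Lemma ext_degeneracy k : degeneracy_le t (fun x y => A x y || B x y) k -> size W < k ->
  degeneracy_le t' (fun x y => ext_A x y || ext_B x y) k.
Proof.
move=> deg szW Sq uq allS ne; case p1S: (p1 \in Sq).
  exists p1 => //; rewrite -size_filter.
  have nbr : {subset filter (fun y => ext_A p1 y || ext_B p1 y) Sq <= p0 :: W}.
    move=> y; rewrite mem_filter => /andP[/ext_pairs + _].
    case=> [/(model_pair_nodes model)|[/ext_newP[_ [->|yW]]|]].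
    - by rewrite node_p1.
    - exact: mem_head.
    - by rewrite inE yW orbT.
    - by rewrite ext_new_p1.
  exact: leq_trans (uniq_leq_size (filter_uniq _ uq) nbr) szW.
case p0S: (p0 \in Sq).
  exists p0 => //; rewrite (eq_in_count (a2 := pred0)) ?count_pred0 // => y yS /=.
  apply/negbTE/negP => /ext_pairs.
  case=> [/(model_pair_nodes model)|[/ext_newP[]|/ext_newP[ey _]]].
  - by rewrite node_p0.
  - by move/eqP; rewrite eqseq_rcons andbF.
  - by move: yS; rewrite ey p1S.
have allt : all (is_node t) Sq.
  apply/allP => y yS; have := allP allS y yS; rewrite is_node_graft //.
  by case/or3P=> [//|/eqP ey|/eqP ey]; move: yS; rewrite ey ?p0S ?p1S.
have [x xS hx] := deg Sq uq allt ne; exists x => //.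
rewrite (eq_in_count (a2 := fun y => A x y || B x y)) // => y yS /=.
by have [-> ->] := ext_AB_old (allP allt x xS) (allP allt y yS).
Qed.

Lemma ext_model_adj_old a b : is_node t a -> is_node t b ->
  model_adj A B a b <-> model_adj ext_A ext_B a b.
Proof.
move=> na nb; split; apply: model_adj_transfer => x y le _;
by have /andP[nx ny] := pair_le_nodes le na nb; have [-> ->] := ext_AB_old nx ny.
Qed.

Lemma ext_model_adj_child (b : bool) q : is_node t q -> (b -> q \notin W) ->
  model_adj A B p q <-> model_adj ext_A ext_B (rcons p b) q.
Proof.
move=> nq qW; have node_pb : is_node t (rcons p b) = false := is_node_rcons_leaf b leaf_p.
have no_new x y : ext_new x y -> pair_le x y (rcons p b) q = false.
  case/ext_newP=> -> hy; apply/negP => /orP[] /andP[h1 h2].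
  - case: b qW node_pb h1 => qW node_pb; last first.
      by rewrite /anc prefix_rconsR prefix_rcons_self eqseq_rcons andbF.
    case: hy h2 => [->|yW] h2; first by move: node_p0; rewrite (is_node_prefix h2 nq).
    have ly : is_leaf t y := allP leaf_W y yW.
    by move: (qW isT); rewrite -(is_leaf_prefix ly nq h2) yW.
  - by move: node_p1; rewrite (is_node_prefix h2 nq).
have le_pb x y : is_node t x -> is_node t y ->
    pair_le x y (rcons p b) q = pair_le x y p q.
  have anc_pb z : is_node t z -> anc z (rcons p b) = anc z p.
    by move=> nz; rewrite /anc prefix_rconsR; case: eqP nz => // ->; rewrite node_pb.
  by move=> nx ny; rewrite /pair_le !anc_pb.
have fwd x y : pair_le x y p q -> A x y || B x y ->
    [/\ pair_le x y (rcons p b) q, ext_A x y = A x y & ext_B x y = B x y].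
  move=> le /(model_pair_nodes model)/andP[nx ny].
  by rewrite le_pb //; have [-> ->] := ext_AB_old nx ny.
have bwd x y : pair_le x y (rcons p b) q -> ext_A x y || ext_B x y ->
    [/\ pair_le x y p q, A x y = ext_A x y & B x y = ext_B x y].
  move=> le xy; have /andP[nx ny] : is_node t x && is_node t y.
    case: (ext_pairs xy) => [/(model_pair_nodes model) //|[] n].
    + by rewrite no_new in le.
    + by rewrite pair_le_syml no_new in le.
  by rewrite -le_pb //; have [-> ->] := ext_AB_old nx ny.
by split; apply: model_adj_transfer.
Qed.

Lemma ext_model_adj_new q : q = p0 \/ q \in W ->
  model_adj ext_A ext_B p1 q <-> ext_sign q.
Proof.
move=> hq; have n : ext_new p1 q.
  by rewrite /ext_new eqxx; case: hq => [->|->]; rewrite ?eqxx ?orbT.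
have [eA eB] := ext_AB_new n; rewrite -eB.
by apply: model_adj_pair; [exact: ext_B_sym | rewrite eA eB orNb].
Qed.

End Extension.

Definition distinguishers (V : finType) (E : rel V) (S : {set V}) (u v : V) : {set V} :=
  [set w in S | [&& w != u, w != v & E u w != E v w]].

Lemma card_distinguishers (V : finType) (E : rel V) S u v :
  #|distinguishers E S u v| <= sd E S u v.
Proof.
apply: subset_leq_card; apply/subsetP => w; rewrite !inE => /and4P[wS wu wv].
by rewrite wS wu wv; case: (E u w); case: (E v w).
Qed.

Definition admits_on (V : finType) (E : rel V) (S : {set V}) t (A B : rel (seq bool)) :=
  exists f : V -> seq bool,
    [/\ {in S &, injective f}, (forall x, x \in S -> is_leaf t (f x)),
        (forall p, is_leaf t p -> exists2 x, x \in S & f x = p) &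
        (forall x y, x \in S -> y \in S -> x != y -> (E x y <-> model_adj A B (f x) (f y)))].

Definition clean_model_on (V : finType) (E : rel V) (d : nat) (S : {set V}) :=
  exists t (A B : rel (seq bool)),
    [/\ signed_tree_model t A B, clean t A B,
        degeneracy_le t (fun u v => A u v || B u v) d.+1 & admits_on E S t A B].

Lemma clean_model_on_single (V : finType) (E : rel V) d (S : {set V}) :
  #|S| = 1 -> clean_model_on E d S.
Proof.
move/eqP/cards1P=> [x0 ->]; exists BLeaf, (fun _ _ => false), (fun _ _ => false); split.
- by [].
- by case.
- move=> [|a s] // _ _ _; exists a; first exact: mem_head.
  by rewrite (@eq_count _ _ pred0) // count_pred0.
- exists (fun _ => [::]); split => // [x y|[|b q] //|x y]; rewrite ?inE.
  + by move=> /eqP -> /eqP ->.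
  + by exists x0; rewrite ?inE.
  + by move=> /eqP -> /eqP ->; rewrite eqxx.
Qed.

Definition relabel (V : eqType) (f : V -> seq bool) (u v x : V) : seq bool :=
  if x == v then rcons (f u) true else if x == u then rcons (f u) false else f x.

Lemma relabel_leaves (V : finType) (S : {set V}) t f u v :
  u \in S :\ v -> v \in S -> {in S :\ v &, injective f} ->
  (forall x, x \in S :\ v -> is_leaf t (f x)) ->
  (forall q, is_leaf t q -> exists2 x, x \in S :\ v & f x = q) ->
  [/\ {in S &, injective (relabel f u v)},
      (forall x, x \in S -> is_leaf (graft t (f u)) (relabel f u v x)) &
      (forall q, is_leaf (graft t (f u)) q -> exists2 x, x \in S & relabel f u v x = q)].
Proof.
move=> uSv vS finj fleaf fsurj; have lu := fleaf u uSv.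
have uv : u != v by case/setD1P: uSv.
have fv : relabel f u v v = rcons (f u) true by rewrite /relabel eqxx.
have fu : relabel f u v u = rcons (f u) false by rewrite /relabel (negbTE uv) eqxx.
have old_node x : x \in S :\ v -> is_node t (f x) by move/fleaf/is_leaf_node.
have cases x : x \in S -> [\/ x = v, x = u |
    [/\ x \in S :\ v, relabel f u v x = f x & f x != f u]].
  move=> xS; case: (eqVneq x v) => [|xv]; first by constructor 1.
  case: (eqVneq x u) => [|xu]; first by constructor 2.
  have xSv : x \in S :\ v by rewrite !inE xv.
  constructor 3; rewrite /relabel (negbTE xv) (negbTE xu); split=> //.
  by apply: contra_neq xu; apply: finj.
split.
- move=> x y /cases[->|->|[xSv -> fxu]] /cases[->|->|[ySv -> fyu]]; rewrite ?fv ?fu //.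
  all: try by move/eqP; rewrite eqseq_rcons andbF.
  all: try by move=> e; move: (old_node _ xSv); rewrite e is_node_rcons_leaf.
  all: try by move=> e; move: (old_node _ ySv); rewrite -e is_node_rcons_leaf.
  exact: finj.
- move=> x /cases[->|->|[xSv -> fxu]]; rewrite ?fv ?fu is_leaf_graft // ?eqxx ?orbT //.
  by rewrite fleaf ?fxu.
- move=> q; rewrite is_leaf_graft // => /or3P[/andP[lq qu]|/eqP ->|/eqP ->].
  + have [x xSv fx] := fsurj q lq; case/setD1P: (xSv) => xv xS.
    exists x => //; case: (cases x xS) => [exv|exu|[_ -> //]].
      by move: xv; rewrite exv eqxx.
    by move: qu; rewrite -fx exu eqxx.
  + by exists u => //; case/setD1P: uSv.
  + by exists v.
Qed.


Section Step.

Variables (V : finType) (E : rel V) (S : {set V}) (u v : V).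
Variables (t : btree) (A B : rel (seq bool)) (f : V -> seq bool).
Hypothesis symE : symmetric E.
Hypothesis uSv : u \in S :\ v.
Hypothesis model : signed_tree_model t A B.
Hypothesis finj : {in S :\ v &, injective f}.
Hypothesis fleaf : forall x, x \in S :\ v -> is_leaf t (f x).
Hypothesis fadj : forall x y, x \in S :\ v -> y \in S :\ v -> x != y ->
  (E x y <-> model_adj A B (f x) (f y)).

Local Notation D := (distinguishers E S u v).

Definition distinguisher_leaves := map f (enum D).
Definition distinguisher_sign y := [exists w in D, (f w == y) && E v w].

Local Notation W := distinguisher_leaves.
Local Notation A' := (ext_A A (f u) W (E u v) distinguisher_sign).
Local Notation B' := (ext_B B (f u) W (E u v) distinguisher_sign).
Local Notation g := (relabel f u v).

Let DSv : {subset D <= S :\ v}.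
Proof. by move=> w; rewrite !inE => /and4P[-> _ -> _]. Qed.

Let node_f x : x \in S :\ v -> is_node t (f x).
Proof. by move/fleaf/is_leaf_node. Qed.

Let lfu : is_leaf t (f u) := fleaf uSv.

Lemma mem_distinguisher_leaves w : w \in S :\ v -> (f w \in W) = (w \in D).
Proof.
move=> wSv; apply/mapP/idP => [[w' w'D fw]|wD]; last by exists w; rewrite ?mem_enum.
by rewrite mem_enum in w'D; rewrite (finj wSv (DSv w'D) fw).
Qed.

Lemma distinguisher_signE w : w \in D -> distinguisher_sign (f w) = E v w.
Proof.
move=> wD; apply/exists_inP/idP => [[w' w'D /andP[/eqP e]]|]; last by exists w; rewrite ?eqxx.
by rewrite (finj (DSv w'D) (DSv wD) e).
Qed.

Lemma distinguisher_leaves_leaf : all (is_leaf t) W.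
Proof. by apply/allP => _ /mapP[w wD ->]; apply/fleaf/DSv; rewrite -mem_enum. Qed.

Lemma distinguisher_leaves_notin : f u \notin W.
Proof. by rewrite mem_distinguisher_leaves // !inE eqxx andbF. Qed.

Lemma size_distinguisher_leaves : size W <= sd E S u v.
Proof. by rewrite size_map -cardE card_distinguishers. Qed.

Let leafW := distinguisher_leaves_leaf.
Let fu_W := distinguisher_leaves_notin.

Let relabelE x : x \in S :\ v -> x != u -> g x = f x.
Proof. by case/setD1P=> xv _ xu; rewrite /relabel (negbTE xv) (negbTE xu). Qed.

Let uv : u != v.
Proof. by case/setD1P: uSv. Qed.

Let relabel_u : g u = rcons (f u) false.
Proof. by rewrite /relabel (negbTE uv) eqxx. Qed.

Let relabel_v : g v = rcons (f u) true.
Proof. by rewrite /relabel eqxx. Qed.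

Lemma relabel_adj_old x y : x \in S :\ v -> y \in S :\ v -> x != y -> x != u -> y != u ->
  E x y <-> model_adj A' B' (g x) (g y).
Proof.
move=> xSv ySv xy xu yu; rewrite !relabelE //; apply: iff_trans (fadj xSv ySv xy) _.
exact: (ext_model_adj_old A B W (E u v) distinguisher_sign lfu (node_f xSv) (node_f ySv)).
Qed.

Lemma relabel_adj_u y : y \in S :\ v -> y != u -> E u y <-> model_adj A' B' (g u) (g y).
Proof.
move=> ySv yu; rewrite relabel_u (relabelE ySv yu).
apply: iff_trans (fadj uSv ySv _) _; first by rewrite eq_sym.
exact: (ext_model_adj_child (E u v) _ model lfu leafW (b := false) (node_f ySv)).
Qed.

Lemma relabel_adj_v y : y \in S :\ v -> E v y <-> model_adj A' B' (g v) (g y).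
Proof.
have adj_new := ext_model_adj_new (E u v) distinguisher_sign model lfu leafW fu_W.
move=> ySv; rewrite relabel_v; case: (eqVneq y u) => [->|yu].
  rewrite relabel_u symE; apply: iff_sym.
  by apply: iff_trans (adj_new _ (or_introl erefl)) _; rewrite /ext_sign eqxx.
rewrite (relabelE ySv yu); case: (boolP (y \in D)) => yD.
  have yW : f y \in W by rewrite mem_distinguisher_leaves.
  have fy_p0 : (f y == rcons (f u) false) = false.
    by apply: contraTF (node_f ySv) => /eqP ->; rewrite is_node_rcons_leaf.
  apply: iff_sym; apply: iff_trans (adj_new _ (or_intror yW)) _.
  by rewrite /ext_sign fy_p0 distinguisher_signE.
have -> : E v y = E u y.
  move: yD; case/setD1P: ySv => yv yS; rewrite !inE yS yu yv.
  by case: (E u y); case: (E v y).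
apply: iff_trans (fadj uSv ySv _) _; first by rewrite eq_sym.
apply: (ext_model_adj_child (E u v) _ model lfu leafW (b := true) (node_f ySv)).
by rewrite mem_distinguisher_leaves.
Qed.

Lemma relabel_adj x y : x \in S -> y \in S -> x != y ->
  E x y <-> model_adj A' B' (g x) (g y).
Proof.
have adj a b : a \in S -> b \in S -> a != b -> b != v -> (b != u) || (a == v) ->
    E a b <-> model_adj A' B' (g a) (g b).
  move=> aS bS ab bv; have bSv : b \in S :\ v by rewrite !inE bv.
  case: (eqVneq a v) => [-> _|av]; first exact: relabel_adj_v.
  rewrite orbF => bu; have aSv : a \in S :\ v by rewrite !inE av.
  case: (eqVneq a u) => [->|au]; first exact: relabel_adj_u.
  exact: relabel_adj_old.
move=> xS yS xy; case: (eqVneq y v) => [eyv|yv].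
  rewrite eyv in yS xy *; apply: model_adj_iff_sym symE _.
  by apply: adj; rewrite // ?eqxx ?orbT // eq_sym.
case: (eqVneq y u) => [eyu|yu]; last by apply: adj; rewrite ?yu.
rewrite eyu in yS xy *; case: (eqVneq x v) => [exv|xv].
  by rewrite exv in xS xy *; apply: adj; rewrite ?eqxx ?orbT // eq_sym.
by apply: model_adj_iff_sym symE _; apply: adj; rewrite // ?xy // eq_sym.
Qed.

End Step.

Lemma clean_model_on_step (V : finType) (E : rel V) d (S : {set V}) u v :
  symmetric E -> u \in S -> v \in S -> u != v -> sd E S u v <= d ->
  clean_model_on E d (S :\ v) -> clean_model_on E d S.
Proof.
move=> symE uS vS uv sd_le [t [A [B [model cl deg [f [finj fleaf fsurj fadj]]]]]].
have uSv : u \in S :\ v by rewrite !inE uv.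
have lfu := fleaf u uSv.
have leafW := distinguisher_leaves_leaf E u fleaf.
have fu_W := distinguisher_leaves_notin E uSv finj.
have szW : size (distinguisher_leaves E S u v f) < d.+1.
  by rewrite ltnS (leq_trans (size_distinguisher_leaves _ _ _ _ _)).
exists (graft t (f u)),
  (ext_A A (f u) (distinguisher_leaves E S u v f) (E u v) (distinguisher_sign E S u v f)),
  (ext_B B (f u) (distinguisher_leaves E S u v f) (E u v) (distinguisher_sign E S u v f)).
split.
- by apply: ext_signed_tree_model.
- by apply: ext_clean.
- by apply: ext_degeneracy.
- have [inj' leaf' surj'] := relabel_leaves uSv vS finj fleaf fsurj.
  by exists (relabel f u v); split=> //; apply: (relabel_adj symE uSv model finj fleaf fadj).
Qed.

Lemma sdd_clean_model_on (V : finType) (E : rel V) d (S : {set V}) :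
  symmetric E -> sdd_le E d S -> clean_model_on E d S.
Proof.
move=> symE; elim=> [{}S /clean_model_on_single //|{}S u v uS vS uv sd_le _].
exact: clean_model_on_step symE uS vS uv sd_le.
Qed.

Lemma admits_on_setT (V : finType) (E : rel V) t A B :
  admits_on E [set: V] t A B -> admits E t A B.
Proof.
case=> f [finj fleaf fsurj fadj]; exists f; split.
- by move=> x y; apply: finj; rewrite inE.
- by move=> x; apply: fleaf; rewrite inE.
- by move=> q /fsurj[x _ <-]; exists x.
- by move=> x y; apply: fadj; rewrite inE.
Qed.

Unset Implicit Arguments.
Theorem lemma3p1 (V : finType) (E : rel V) (d : nat) :
  symmetric E -> irreflexive E -> 0 < #|V| ->
  sdd_le E d [set: V] ->
  exists (t : btree) (A B : rel (seq bool)),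
    [/\ signed_tree_model t A B, clean t A B,
        degeneracy_le t (fun u v => A u v || B u v) d.+1 &
        admits E t A B].
Proof.
move=> symE _ _ /(sdd_clean_model_on symE)[t [A [B [model cl deg adm]]]].
by exists t, A, B; split=> //; apply: admits_on_setT.
Qed.
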